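(* Let $n\ge d$, $\mathbf X\in\mathbb R^{n\times d}$ with full column rank, $1\le k<d$, $\lambda>0$, and $\mathbf y\in\mathbb R^n$ with $\hat\sigma_{1:k}=\|(\mathbf I-\mathbf P_{-1:k})\mathbf y\|>0$; let $\hat{\mathbf y}_{1:k}=\mathbf P_{-1:k}\mathbf y$, $\mathbf u=\mathbf V^T(\mathbf y-\hat{\mathbf y}_{1:k})/\hat\sigma_{1:k}$, and let $\hat{\boldsymbol\beta}^\lambda=\arg\min_{\boldsymbol\beta\in\mathbb R^d}\big(\frac1{2n}\|\mathbf y-\mathbf X\boldsymbol\beta\|_2^2+\lambda(\|\boldsymbol\beta_{1:k}\|_2+\|\boldsymbol\beta_{-1:k}\|_1)\big)$. For $\mathbf b\in\mathbb R^k$ and $\boldsymbol\epsilon$ in the closed unit ball of $\mathbb R^k$ define $$\hat{\boldsymbol\beta}^\lambda_{-1:k}(\mathbf b)=\arg\min_{\boldsymbol\gamma\in\mathbb R^{d-k}}\Big(\tfrac1{2n}\|\mathbf y-\mathbf X_{1:k}\mathbf b-\mathbf X_{-1:k}\boldsymbol\gamma\|_2^2+\lambda\|\boldsymbol\gamma\|_1\Big),$$ $$\Lambda_{1:k}(\mathbf b,\boldsymbol\epsilon)=\frac1{\hat\sigma_{1:k}}(\mathbf X_{1:k}^T\mathbf V_{1:k})^{-1}\Big(-\mathbf X_{1:k}^T\big(\hat{\mathbf y}_{1:k}-\mathbf X_{1:k}\mathbf b-\mathbf X_{-1:k}\hat{\boldsymbol\beta}^\lambda_{-1:k}(\mathbf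 b)\big)+n\lambda\boldsymbol\epsilon\Big),$$ and let $f^{-1}(\mathbf b)=\{\Lambda_{1:k}(\mathbf b,\mathbf b/\|\mathbf b\|)\}$ if $\mathbf b\ne\mathbf 0$ and $f^{-1}(\mathbf 0)=\{\Lambda_{1:k}(\mathbf 0,\boldsymbol\epsilon):\|\boldsymbol\epsilon\|\le1\}$. Then the function $f:\mathbb R^k\to\mathbb R^k$ with this inverse satisfies $\hat{\boldsymbol\beta}^\lambda_{1:k}=f(\mathbf u_{1:k})$; i.e., for every $\mathbf b\in\mathbb R^k$, $\hat{\boldsymbol\beta}^\lambda_{1:k}=\mathbf b$ if and only if $\mathbf u_{1:k}\in f^{-1}(\mathbf b)$.
   Context: $\mathbf A_i$, $\mathbf A_{1:i}$, $\mathbf A_{-1:i}$ denote the $i$-th column, first $i$ columns, and submatrix with first $i$ columns removed (similarly for vector entries). $\mathbf P_{-1:i}$ is the orthogonal projection onto the column space of $\mathbf X_{-1:i}$. $\mathbf V\in\mathbb R^{n\times(n-d+k)}$ has orthonormal columns spanning the orthogonal complement of the column space of $\mathbf X_{-1:k}$, with first $k$ columns $\mathbf V_i=(\mathbf I-\mathbf P_{-1:i})\mathbf X_i/\|(\mathbf I-\mathbf P_{-1:i})\mathbf X_i\|$. Both minimizers above are unique since $\mathbf X$ and $\mathbf X_{-1:k}$ have full column rank. *)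

From HB Require Import structures.
From mathcomp Require Import all_boot all_order all_algebra.
From mathcomp Require Import reals.
From Stdlib Require Import ClassicalEpsilon.
Set Implicit Arguments. Unset Strict Implicit. Unset Printing Implicit Defensive.
Import Order.TTheory GRing.Theory Num.Theory.
Local Open Scope ring_scope.

Section Defs.
Variable R : realType.

Definition vnorm (p : nat) (v : 'cV[R]_p) : R := Num.sqrt (\sum_i v i 0 ^+ 2).

Definition l1norm (p : nat) (v : 'cV[R]_p) : R := \sum_i `|v i 0|.

(* P is the orthogonal projection onto the column space of A:
   symmetric, idempotent, with the same column space as A. *)
Definition is_oproj (n r : nat) (A : 'M[R]_(n, r)) (P : 'M[R]_n) : Prop :=
  P^T = P /\ P *m P = P /\ (P^T == A^T)%MS.

Definition oproj (n r : nat) (A : 'M[R]_(n, r)) : 'M[R]_n :=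
  epsilon (inhabits 0) (is_oproj A).

(* A with the columns outside S replaced by zero: its column space is the
   span of the columns of A indexed by S. *)
Definition colmask (n d : nat) (S : pred 'I_d) (A : 'M[R]_(n, d)) : 'M[R]_(n, d) :=
  \matrix_(i, j) (if S j then A i j else 0).

(* P_{-1:i}: orthogonal projection onto the span of the columns of X with the
   first i columns removed (i.e. the columns of 0-based index >= i). *)
Definition Pminus (n d : nat) (X : 'M[R]_(n, d)) (i : nat) : 'M[R]_n :=
  oproj (colmask (fun j : 'I_d => (i <= j)%N) X).

Definition is_argmin (T : Type) (F : T -> R) (x : T) : Prop :=
  forall z, F x <= F z.

Definition mixed_obj (n k m : nat) (X : 'M[R]_(n, k + m)) (y : 'cV[R]_n)
  (lam : R) (beta : 'cV[R]_(k + m)) : R :=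
  (2 * n%:R)^-1 * vnorm (y - X *m beta) ^+ 2
  + lam * (vnorm (usubmx beta) + l1norm (dsubmx beta)).

Definition partial_obj (n k m : nat) (X : 'M[R]_(n, k + m)) (y : 'cV[R]_n)
  (lam : R) (b : 'cV[R]_k) (g : 'cV[R]_m) : R :=
  (2 * n%:R)^-1 * vnorm (y - lsubmx X *m b - rsubmx X *m g) ^+ 2
  + lam * l1norm g.

End Defs.

From HB Require Import structures.
From mathcomp Require Import all_boot all_order all_algebra.
From mathcomp Require Import reals.
From mathcomp Require Import ring lra zify.
From Stdlib Require Import ClassicalEpsilon.
Set Implicit Arguments. Unset Strict Implicit. Unset Printing Implicit Defensive.
Import Order.TTheory GRing.Theory Num.Theory.
Local Open Scope ring_scope.

(* Write r(b) = y - X_{1:k} b - X_{-1:k} gam(b).  The objective is a least-squares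
   term plus a convex penalty, so its minimizers are characterized by first-order
   conditions; profiling out the lasso block through gam shows that beta_{1:k} = b
   iff X_{1:k}^T r(b) / (n lam) is a subgradient eps of the Euclidean norm at b,
   i.e. eps = b / |b| if b <> 0 and |eps| <= 1 if b = 0.  Since V_{1:k} arises by
   Gram-Schmidt from the columns of X_{1:k} against the span of X_{-1:k}, the
   columns of V beyond k are orthogonal to X_{1:k} and X_{1:k}^T V_{1:k} is
   invertible.  As y - yhat lies in the span of V, this gives
   X_{1:k}^T (y - yhat) = sigma (X_{1:k}^T V_{1:k}) u_{1:k}, and solving the
   subgradient equation X_{1:k}^T r(b) = n lam eps for u_{1:k} yields exactly
   u_{1:k} = Lam(b, eps). *)

Lemma mulmx_col_mx (R : pzRingType) n k m (X : 'M[R]_(n, k + m)) (b : 'cV[R]_k) g :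
  X *m col_mx b g = lsubmx X *m b + rsubmx X *m g.
Proof. by rewrite -{1}[X]hsubmxK mul_row_col. Qed.

Lemma unitmx_inj (R : fieldType) p (M : 'M[R]_p) :
  (forall v : 'cV[R]_p, M *m v = 0 -> v = 0) -> M \in unitmx.
Proof.
move=> M_inj; rewrite -unitmx_tr -row_free_unit -kermx_eq0.
apply/eqP/row_matrixP => i; rewrite row0; apply: trmx_inj; rewrite trmx0.
by apply: M_inj; rewrite -[M in M *m _]trmxK -trmx_mul -row_mul mulmx_ker row0 trmx0.
Qed.

Lemma full_col_rank_mulmx_inj (R : fieldType) n p (A : 'M[R]_(n, p)) (z1 z2 : 'cV[R]_p) :
  \rank A = p -> A *m z1 = A *m z2 -> z1 = z2.
Proof.
move=> rankA Az; have A_free : row_free A^T by rewrite /row_free mxrank_tr rankA.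
by apply: trmx_inj; apply: (row_free_inj A_free); rewrite -!trmx_mul Az.
Qed.

Lemma scale_invmx_eqP (R : fieldType) p s (M : 'M[R]_p) (a t c : 'cV[R]_p) :
  s != 0 -> M \in unitmx ->
  s *: a = s *: (invmx M *m (- t + c)) <-> M *m a + t = c.
Proof.
move=> s_neq0 M_unit; split=> [/(scalerI s_neq0) ->|<-].
  by rewrite mulKVmx // addrAC addNr add0r.
by rewrite (addrC (M *m a)) addKr mulKmx.
Qed.

Section EuclideanGeometry.
Variable R : realType.

Definition dot p (u v : 'cV[R]_p) : R := (u^T *m v) 0 0.

Lemma dotE p (u v : 'cV[R]_p) : dot u v = \sum_i u i 0 * v i 0.
Proof. by rewrite /dot mxE; apply: eq_bigr => i _; rewrite mxE. Qed.

Lemma dotC p (u v : 'cV[R]_p) : dot u v = dot v u.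
Proof. by rewrite !dotE; apply: eq_bigr => i _; rewrite mulrC. Qed.

Lemma dotDl p (u v w : 'cV[R]_p) : dot (u + v) w = dot u w + dot v w.
Proof. by rewrite /dot linearD mulmxDl mxE. Qed.

Lemma dotZl p a (u w : 'cV[R]_p) : dot (a *: u) w = a * dot u w.
Proof. by rewrite /dot linearZ -scalemxAl mxE. Qed.

Lemma dotNl p (u w : 'cV[R]_p) : dot (- u) w = - dot u w.
Proof. by rewrite -scaleN1r dotZl mulN1r. Qed.

Lemma dotBl p (u v w : 'cV[R]_p) : dot (u - v) w = dot u w - dot v w.
Proof. by rewrite dotDl dotNl. Qed.

Lemma dotDr p (u v w : 'cV[R]_p) : dot w (u + v) = dot w u + dot w v.
Proof. by rewrite dotC dotDl !(dotC w). Qed.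

Lemma dotNr p (u w : 'cV[R]_p) : dot w (- u) = - dot w u.
Proof. by rewrite dotC dotNl dotC. Qed.

Lemma dotBr p (u v w : 'cV[R]_p) : dot w (u - v) = dot w u - dot w v.
Proof. by rewrite dotC dotBl !(dotC w). Qed.

Lemma dotZr p a (u w : 'cV[R]_p) : dot w (a *: u) = a * dot w u.
Proof. by rewrite dotC dotZl dotC. Qed.

Lemma dot0r p (u : 'cV[R]_p) : dot u 0 = 0.
Proof. by rewrite /dot mulmx0 mxE. Qed.

Lemma dot_trmx n p (A : 'M[R]_(n, p)) u v : dot (A^T *m u) v = dot u (A *m v).
Proof. by rewrite /dot trmx_mul trmxK mulmxA. Qed.

Lemma dotvv_ge0 p (u : 'cV[R]_p) : 0 <= dot u u.
Proof. by rewrite dotE sumr_ge0 // => i _; rewrite -expr2 sqr_ge0. Qed.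

Lemma dotvv_eq0 p (u : 'cV[R]_p) : (dot u u == 0) = (u == 0).
Proof.
apply/idP/eqP => [|->]; last by rewrite dot0r.
rewrite dotE => /eqP/psumr_eq0P uu0; apply/matrixP => i j.
have uu_ge0 l : true -> 0 <= u l 0 * u l 0 by rewrite -expr2 sqr_ge0.
have /eqP := uu0 uu_ge0 i isT.
by rewrite ord1 mxE mulf_eq0 orbb => /eqP.
Qed.

Lemma vnorm_sqr p (u : 'cV[R]_p) : vnorm u ^+ 2 = dot u u.
Proof.
rewrite /vnorm sqr_sqrtr; last by rewrite sumr_ge0 // => i _; rewrite sqr_ge0.
by rewrite dotE; apply: eq_bigr => i _; rewrite expr2.
Qed.

Lemma vnorm_ge0 p (u : 'cV[R]_p) : 0 <= vnorm u.
Proof. exact: sqrtr_ge0. Qed.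

Lemma vnorm_eq0 p (u : 'cV[R]_p) : (vnorm u == 0) = (u == 0).
Proof. by rewrite -sqrf_eq0 vnorm_sqr dotvv_eq0. Qed.

Lemma vnorm0 p : vnorm (0 : 'cV[R]_p) = 0.
Proof. by apply/eqP; rewrite vnorm_eq0. Qed.

Lemma vnormZ p a (u : 'cV[R]_p) : vnorm (a *: u) = `|a| * vnorm u.
Proof.
apply/eqP; rewrite -(@eqrXn2 _ 2) ?mulr_ge0 ?vnorm_ge0 //.
by rewrite exprMn !vnorm_sqr dotZl dotZr real_normK ?num_real // mulrA expr2.
Qed.

Lemma vnormB_sqr p (u v : 'cV[R]_p) :
  vnorm (u - v) ^+ 2 = vnorm u ^+ 2 - 2 * dot u v + vnorm v ^+ 2.
Proof. by rewrite !vnorm_sqr dotBl !dotBr (dotC v u); ring. Qed.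

Lemma cauchy_schwarz p (u v : 'cV[R]_p) : dot u v <= vnorm u * vnorm v.
Proof.
have [->|u0] := eqVneq u 0; first by rewrite dotC dot0r vnorm0 mul0r.
have [->|v0] := eqVneq v 0; first by rewrite dot0r vnorm0 mulr0.
set s := vnorm u; set q := vnorm v.
have sq_gt0 : 0 < s * q by rewrite mulr_gt0 // lt_def vnorm_eq0 ?u0 ?v0 vnorm_ge0.
have := dotvv_ge0 (q *: u - s *: v).
rewrite dotBl !dotBr !dotZl !dotZr (dotC v u) -!vnorm_sqr -/s -/q => h.
have : 0 <= s * q * (s * q - dot u v) by nra.
by rewrite pmulr_rge0 // subr_ge0.
Qed.

Lemma ler_vnormD p (u v : 'cV[R]_p) : vnorm (u + v) <= vnorm u + vnorm v.
Proof.
rewrite -(@ler_pXn2r _ 2) ?nnegrE ?addr_ge0 ?vnorm_ge0 //.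
rewrite vnorm_sqr dotDl !dotDr (dotC v u) sqrrD -!vnorm_sqr.
have := cauchy_schwarz u v; lra.
Qed.

End EuclideanGeometry.

Section NormSubgradient.
Variable R : realType.

Lemma vnorm_subgradP p (w b : 'cV[R]_p) :
  (forall b', dot w (b' - b) <= vnorm b' - vnorm b) <->
  vnorm w <= 1 /\ dot w b = vnorm b.
Proof.
split=> [sub|[w_le1 wb] b'].
  have := sub 0; rewrite sub0r vnorm0 dotC dotNl dotC => at0.
  have := sub (b + b); rewrite addrC addKr => at2b.
  have := sub (b + w); rewrite addrC addKr -vnorm_sqr => atbw.
  have := ler_vnormD b b; have := ler_vnormD b w.
  have := vnorm_ge0 w; have := vnorm_ge0 b.
  by split; nra.
rewrite dotBr wb lerD2r.
apply: le_trans (cauchy_schwarz _ _) _.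
by rewrite ler_piMl ?vnorm_ge0.
Qed.

Lemma vnorm_subgrad_cases p (w b : 'cV[R]_p) :
  vnorm w <= 1 /\ dot w b = vnorm b <->
  if b != 0 then w = (vnorm b)^-1 *: b else vnorm w <= 1.
Proof.
have [->|b0] := eqVneq b 0; first by rewrite /= dot0r vnorm0; tauto.
have nb_gt0 : 0 < vnorm b by rewrite lt_def vnorm_eq0 b0 vnorm_ge0.
rewrite /=; split=> [[w_le1 wb]|->]; last first.
  rewrite vnormZ ger0_norm ?invr_ge0 ?vnorm_ge0 // mulVf ?gt_eqF //.
  by rewrite dotZl -vnorm_sqr expr2 mulKf ?gt_eqF.
(* equality in Cauchy-Schwarz: |w - b/|b||^2 = |w|^2 - 1 <= 0 *)
apply/eqP; rewrite -subr_eq0 -dotvv_eq0 eq_le dotvv_ge0 andbT.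
rewrite -vnorm_sqr vnormB_sqr vnormZ ger0_norm ?invr_ge0 ?vnorm_ge0 //.
rewrite dotZr wb mulVf ?gt_eqF // mulr1.
have : vnorm w ^+ 2 <= 1 by rewrite expr_le1 ?vnorm_ge0.
lra.
Qed.

End NormSubgradient.

Section ConvexLeastSquares.
Variable R : realType.

Definition convex_fun p (phi : 'cV[R]_p -> R) : Prop :=
  forall z z' (t : R), 0 <= t <= 1 ->
    phi (z + t *: (z' - z)) <= phi z + t * (phi z' - phi z).

Lemma convexZ p c (phi : 'cV[R]_p -> R) :
  0 <= c -> convex_fun phi -> convex_fun (fun z => c * phi z).
Proof.
move=> c_ge0 phi_cvx z z' t t01; have := phi_cvx z z' t t01.
by rewrite -mulrBr mulrCA -mulrDr; apply: ler_wpM2l.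
Qed.

Lemma convex_col_mx p1 p2 (f : 'cV[R]_p1 -> R) (g : 'cV[R]_p2 -> R) :
  convex_fun f -> convex_fun g ->
  convex_fun (fun z => f (usubmx z) + g (dsubmx z)).
Proof.
move=> f_cvx g_cvx z z' t t01.
have -> : usubmx (z + t *: (z' - z)) = usubmx z + t *: (usubmx z' - usubmx z).
  by apply/matrixP => i j; rewrite !mxE.
have -> : dsubmx (z + t *: (z' - z)) = dsubmx z + t *: (dsubmx z' - dsubmx z).
  by apply/matrixP => i j; rewrite !mxE.
have := f_cvx (usubmx z) (usubmx z') t t01.
have := g_cvx (dsubmx z) (dsubmx z') t t01.
lra.
Qed.

Lemma convex_combE p (z z' : 'cV[R]_p) t : z + t *: (z' - z) = (1 - t) *: z + t *: z'.
Proof. by rewrite scalerBr scalerBl scale1r addrA addrAC. Qed.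

Lemma convex_vnorm p : convex_fun (@vnorm R p).
Proof.
move=> z z' t /andP[t_ge0 t_le1]; rewrite convex_combE.
apply: le_trans (ler_vnormD _ _) _.
rewrite !vnormZ !ger0_norm ?subr_ge0 //; lra.
Qed.

Lemma convex_l1norm p : convex_fun (@l1norm R p).
Proof.
move=> z z' t /andP[t_ge0 t_le1]; rewrite convex_combE /l1norm.
rewrite -sumrB mulr_sumr -big_split /=.
apply: ler_sum => i _; rewrite !mxE.
apply: le_trans (ler_normD _ _) _.
rewrite !normrM (ger0_norm t_ge0) (@ger0_norm _ (1 - t)) ?subr_ge0 //; lra.
Qed.

Definition lsq n p (c : 'cV[R]_n) (A : 'M[R]_(n, p)) (z : 'cV[R]_p) : R :=
  (2 * n%:R)^-1 * vnorm (c - A *m z) ^+ 2.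

Lemma lsqD n p (c : 'cV[R]_n) (A : 'M[R]_(n, p)) z d :
  lsq c A (z + d) = lsq c A z - n%:R^-1 * dot (c - A *m z) (A *m d)
                    + (2 * n%:R)^-1 * vnorm (A *m d) ^+ 2.
Proof.
rewrite /lsq mulmxDr opprD addrA vnormB_sqr invfM mulrDr mulrBr; congr (_ - _ + _).
by set N := n%:R^-1; field.
Qed.

Lemma ge0_of_small_perturbation (a c : R) :
  0 <= c -> (forall t, 0 < t <= 1 -> 0 <= a + t * c) -> 0 <= a.
Proof.
move=> c_ge0 pert; rewrite leNgt; apply/negP => a_lt0.
have ca_gt0 : 0 < c - a by lra.
(* at t = -a / (c - a) the perturbed value is -a^2 / (c - a) < 0 *)
have t_gt0 : 0 < - a / (c - a) by rewrite divr_gt0 ?oppr_gt0.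
have t_le1 : - a / (c - a) <= 1 by rewrite ler_pdivrMr // mul1r; lra.
have := pert _ (introT andP (conj t_gt0 t_le1)).
have -> : a + - a / (c - a) * c = - (a ^+ 2 / (c - a)) by field; rewrite gt_eqF.
have : 0 < a ^+ 2 / (c - a) by apply: divr_gt0; rewrite // exprn_even_gt0 // (lt_eqF a_lt0).
lra.
Qed.

Variables (n p : nat) (c : 'cV[R]_n) (A : 'M[R]_(n, p)) (phi : 'cV[R]_p -> R).

Lemma is_argmin_lsqP z0 : convex_fun phi ->
  is_argmin (fun z => lsq c A z + phi z) z0 <->
  forall z, n%:R^-1 * dot (c - A *m z0) (A *m (z - z0)) <= phi z - phi z0.
Proof.
set r := c - A *m z0; have n2_ge0 : 0 <= (2 * n%:R : R)^-1 by rewrite invr_ge0 mulr_ge0 ?ler0n.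
move=> phi_cvx; split=> [z0_min z | opt z].
  set d := z - z0; rewrite -subr_ge0.
  apply: (@ge0_of_small_perturbation _ ((2 * n%:R)^-1 * vnorm (A *m d) ^+ 2)).
    by rewrite mulr_ge0 ?sqr_ge0.
  move=> t /andP[t_gt0 t_le1].
  have := z0_min (z0 + t *: d); have := phi_cvx z0 z t; rewrite ltW // t_le1 => /(_ isT).
  rewrite lsqD -/r -scalemxAr dotZr vnormZ exprMn real_normK ?num_real // => cvx mn.
  rewrite -(pmulr_rge0 _ t_gt0); lra.
have -> : lsq c A z = lsq c A (z0 + (z - z0)) by rewrite addrC subrK.
rewrite lsqD -/r; have := opt z.
have : 0 <= (2 * n%:R)^-1 * vnorm (A *m (z - z0)) ^+ 2 by rewrite mulr_ge0 ?sqr_ge0.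
lra.
Qed.

Lemma argmin_lsq_fit_unique z1 z2 : (0 < n)%N -> convex_fun phi ->
  is_argmin (fun z => lsq c A z + phi z) z1 ->
  is_argmin (fun z => lsq c A z + phi z) z2 -> A *m z1 = A *m z2.
Proof.
move=> n_gt0 phi_cvx /(is_argmin_lsqP _ phi_cvx) opt1 /(is_argmin_lsqP _ phi_cvx) opt2.
have := opt1 z2; have := opt2 z1.
(* adding both inequalities gives |A (z2 - z1)|^2 / n <= 0 *)
have -> : c - A *m z2 = (c - A *m z1) - A *m (z2 - z1).
  by rewrite mulmxBr opprB addrA subrK.
rewrite -[z1 - z2]opprB mulmxN dotNr dotBl.
set d := A *m (z2 - z1) => h2 h1.
have : n%:R^-1 * dot d d <= 0 by lra.
rewrite pmulr_rle0 ?invr_gt0 ?ltr0n // => dd_le0.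
apply/eqP; rewrite eq_sym -subr_eq0 -mulmxBr -/d -dotvv_eq0 eq_le dd_le0.
exact: dotvv_ge0.
Qed.

End ConvexLeastSquares.

Section OrthogonalProjection.
Variable R : realType.

Lemma is_oproj_exists n r (A : 'M[R]_(n, r)) : exists P, is_oproj A P.
Proof.
(* P = C^T (C C^T)^-1 C for a row basis C of A^T *)
set C := row_base A^T.
have CA : (C == A^T)%MS by apply/eqmxP; exact: eq_row_base.
have C_free : row_free C := row_base_free A^T.
clearbody C; set G := C *m C^T.
have GT : G^T = G by rewrite /G trmx_mul trmxK.
have G_unit : G \in unitmx.
  apply: unitmx_inj => v Gv0.
  have CTv0 : C^T *m v = 0.
    by apply/eqP; rewrite -dotvv_eq0 dot_trmx mulmxA -/G Gv0 dot0r.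
  apply: trmx_inj; apply: (row_free_inj C_free).
  by rewrite trmx0 mul0mx -[C]trmxK -trmx_mul CTv0 trmx0.
set P := C^T *m invmx G *m C.
have CP : C *m P = C by rewrite /P !mulmxA -/G mulmxV // mul1mx.
have PT : P^T = P by rewrite /P !trmx_mul trmxK trmx_inv GT mulmxA.
exists P; split=> //; split; first by rewrite {1}/P -!mulmxA CP mulmxA.
rewrite PT; apply/andP; split.
  by apply: submx_trans (proj1 (andP CA)); apply: submxMl.
by apply: submx_trans (proj2 (andP CA)) _; rewrite -{1}CP submxMl.
Qed.

Lemma oproj_spec n r (A : 'M[R]_(n, r)) : is_oproj A (oproj A).
Proof. by apply: epsilon_spec; apply: is_oproj_exists. Qed.

Lemma oproj_sym n r (A : 'M[R]_(n, r)) : (oproj A)^T = oproj A.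
Proof. by case: (oproj_spec A). Qed.

Lemma oproj_mul_sub n r (A : 'M[R]_(n, r)) (v : 'cV[R]_n) :
  ((oproj A *m v)^T <= A^T)%MS.
Proof.
case: (oproj_spec A) => _ [_ /andP[PA _]].
by rewrite trmx_mul; apply: submx_trans PA; apply: submxMl.
Qed.

Lemma mul_oproj n r (A : 'M[R]_(n, r)) : oproj A *m A = A.
Proof.
case: (oproj_spec A) => _ [P_idem /andP[_ /submxP[D AD]]].
have eA : A = oproj A *m D^T by rewrite -[A in LHS]trmxK AD trmx_mul trmxK.
by rewrite {2 3}eA mulmxA P_idem.
Qed.

Lemma tr_colmask_sub n d (S : pred 'I_d) (X : 'M[R]_(n, d)) m (K : 'M[R]_(m, n)) :
  (forall j, S j -> ((col j X)^T <= K)%MS) -> ((colmask S X)^T <= K)%MS.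
Proof.
move=> XK; apply/row_subP => j.
have -> : row j (colmask S X)^T = if S j then (col j X)^T else 0.
  by apply/rowP => i; rewrite !mxE; case: (S j); rewrite ?mxE.
by case: ifP => [/XK|_]; rewrite ?sub0mx.
Qed.

End OrthogonalProjection.

Section GramSchmidtBasis.
Variables (R : realType) (n k m q : nat).
Variables (X : 'M[R]_(n, k + m)) (V : 'M[R]_(n, k + q)).

Let orth_part (c : 'I_k) := (1%:M - Pminus X c.+1) *m col (lshift m c) X.

Hypothesis V_orthonormal : V^T *m V = 1%:M.
Hypothesis V_orth_X2 : V^T *m rsubmx X = 0.
Hypothesis V_gram_schmidt :
  forall c : 'I_k, col (lshift q c) V = (vnorm (orth_part c))^-1 *: orth_part c.

Lemma trV_mulV_blocks :
  (lsubmx V)^T *m lsubmx V = 1%:M /\ (lsubmx V)^T *m rsubmx V = 0.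
Proof.
move: V_orthonormal; rewrite -[V in V^T *m V]hsubmxK -[V in _ *m V]hsubmxK.
rewrite tr_row_mx mul_col_row (scalar_mx_block k q) => /eq_block_mx[].
by rewrite !row_mxKl !row_mxKr.
Qed.

Lemma trV_mulX2_blocks :
  (lsubmx V)^T *m rsubmx X = 0 /\ (rsubmx V)^T *m rsubmx X = 0.
Proof.
move: V_orth_X2; rewrite -[V]hsubmxK tr_row_mx mul_col_mx => /eqP.
by rewrite col_mx_eq0 row_mxKl row_mxKr => /andP[/eqP -> /eqP ->].
Qed.

Lemma col_lshift_decomp (c : 'I_k) :
  col (lshift m c) X =
  vnorm (orth_part c) *: col c (lsubmx V) + Pminus X c.+1 *m col (lshift m c) X.
Proof.
have -> : col c (lsubmx V) = col (lshift q c) V by apply/colP => i; rewrite !mxE.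
rewrite V_gram_schmidt.
have -> : vnorm (orth_part c) *: ((vnorm (orth_part c))^-1 *: orth_part c) = orth_part c.
  have [/eqP|r0] := eqVneq (vnorm (orth_part c)) 0; last by rewrite scalerA mulfV ?scale1r.
  by rewrite vnorm_eq0 => /eqP ->; rewrite !scaler0.
by rewrite /orth_part mulmxBl mul1mx subrK.
Qed.

Lemma Pminus_col_sub (c : 'I_k) p (K : 'M[R]_(p, n)) :
  (forall j : 'I_(k + m), (c < j)%N -> ((col j X)^T <= K)%MS) ->
  ((Pminus X c.+1 *m col (lshift m c) X)^T <= K)%MS.
Proof.
by move=> XK; apply: submx_trans (oproj_mul_sub _ _) _; apply: tr_colmask_sub.
Qed.

Lemma trV1_sub_trX : ((lsubmx V)^T <= X^T)%MS.
Proof.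
apply/row_subP => c; rewrite -tr_col.
have -> : col c (lsubmx V) = col (lshift q c) V by apply/colP => i; rewrite !mxE.
have trcol_sub j : ((col j X)^T <= X^T)%MS by rewrite tr_col row_sub.
rewrite V_gram_schmidt linearZ /= scalemx_sub // /orth_part mulmxBl mul1mx linearB /=.
by rewrite addmx_sub // -scaleN1r scalemx_sub //; apply: Pminus_col_sub.
Qed.

Lemma trcol_X_sub_kerV2 (j : 'I_(k + m)) : ((col j X)^T <= kermx (rsubmx V))%MS.
Proof.
have [_ V1V2] := trV_mulV_blocks; have [_ V2X2] := trV_mulX2_blocks.
(* downward induction on j: column j of X lies in span(V_j, ..., V_(k-1), X_2),
   which is orthogonal to V_2 *)
suff IH t (i : 'I_(k + m)) : (k - t <= i)%N -> ((col i X)^T <= kermx (rsubmx V))%MS.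
  by apply: (IH k); rewrite subnn.
clear j; elim: t i => [|t IHt] j; rewrite ?subn0 => kt_le_j.
  case: (splitP j) => [j1 ej | j2 ej]; first by move: (ltn_ord j1); rewrite -ej ltnNge kt_le_j.
  have -> : col j X = col j2 (rsubmx X).
    by apply/colP => i; rewrite !mxE; congr (X i _); apply: val_inj.
  apply/sub_kermxP; rewrite tr_col -row_mul -[rsubmx V]trmxK -trmx_mul.
  by rewrite V2X2 trmx0 row0.
have [|j_lt] := leqP (k - t) j; first exact: IHt.
have j_lt_k : (j < k)%N by apply: leq_trans j_lt (leq_subr _ _).
have -> : j = lshift m (Ordinal j_lt_k) by apply: val_inj.
rewrite col_lshift_decomp linearD /= addmx_sub //.
  by rewrite linearZ /= scalemx_sub //; apply/sub_kermxP; rewrite tr_col -row_mul V1V2 row0.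
apply: (@Pminus_col_sub (Ordinal j_lt_k) _ (kermx (rsubmx V))) => i ji.
by apply: IHt; move: ji => /=; lia.
Qed.

Lemma trX1_mulV2 : (lsubmx X)^T *m rsubmx V = 0.
Proof.
apply/sub_kermxP/row_subP => c; rewrite -tr_col.
have -> : col c (lsubmx X) = col (lshift m c) X by apply/colP => i; rewrite !mxE.
exact: trcol_X_sub_kerV2.
Qed.

Lemma unitmx_trX1_mulV1 : (lsubmx X)^T *m lsubmx V \in unitmx.
Proof.
have [V1V1 _] := trV_mulV_blocks; have [V1X2 _] := trV_mulX2_blocks.
apply: unitmx_inj => v Mv0; set z := lsubmx V *m v.
have Xz0 : X^T *m z = 0.
  rewrite -[X]hsubmxK tr_row_mx mul_col_mx /z !mulmxA Mv0.
  by rewrite -[lsubmx V]trmxK -trmx_mul V1X2 trmx0 mul0mx col_mx0.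
have /submxP[D zD] : (z^T <= X^T)%MS.
  by rewrite /z trmx_mul; apply: submx_trans trV1_sub_trX; apply: submxMl.
have z0 : z = 0.
  apply/eqP; rewrite -dotvv_eq0 -{2}[z]trmxK zD trmx_mul trmxK.
  by rewrite -dot_trmx Xz0 dotC dot0r.
by rewrite -[v]mul1mx -V1V1 -mulmxA -/z z0 mulmx0.
Qed.

Hypothesis kerX2_sub_trV : (kermx (rsubmx X) <= V^T)%MS.

Lemma resid_in_colV (y : 'cV[R]_n) :
  y - Pminus X k *m y = V *m (V^T *m (y - Pminus X k *m y)).
Proof.
set P := Pminus X k; set w := y - P *m y.
have PX2 : P *m rsubmx X = rsubmx X.
  have <- : rsubmx (colmask (fun j : 'I_(k + m) => (k <= j)%N) X) = rsubmx X.
    by apply/matrixP => i j; rewrite !mxE /= leq_addr.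
  by rewrite mulmx_rsub mul_oproj.
have /submxP[D wD] : (w^T <= V^T)%MS.
  apply: submx_trans kerX2_sub_trV; apply/sub_kermxP.
  by rewrite /w -{1}[y]mul1mx -mulmxBl trmx_mul -mulmxA linearB /= trmx1 oproj_sym
    mulmxBl mul1mx PX2 subrr mulmx0.
have -> : w = V *m D^T by rewrite -[w]trmxK wD trmx_mul trmxK.
by rewrite [V^T *m _]mulmxA V_orthonormal mul1mx.
Qed.

Lemma trX1_mul_resid (y : 'cV[R]_n) :
  (lsubmx X)^T *m (y - Pminus X k *m y) =
  ((lsubmx X)^T *m lsubmx V) *m usubmx (V^T *m (y - Pminus X k *m y)).
Proof.
set a := V^T *m _; rewrite {1}resid_in_colV -/a.
rewrite -{1}[V]hsubmxK -{1}[a]vsubmxK mul_row_col mulmxDr !mulmxA trX1_mulV2.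
by rewrite mul0mx addr0.
Qed.

End GramSchmidtBasis.

Section GroupLassoOptimality.
Variables (R : realType) (n k m : nat) (X : 'M[R]_(n, k + m)) (y : 'cV[R]_n) (lam : R).
Variables (beta : 'cV[R]_(k + m)) (gam : 'cV[R]_k -> 'cV[R]_m).
Hypotheses (n_gt0 : (0 < n)%N) (lam_gt0 : 0 < lam) (rankX : \rank X = (k + m)%N).
Hypothesis beta_min : is_argmin (mixed_obj X y lam) beta.
Hypothesis gam_min : forall b, is_argmin (partial_obj X y lam b) (gam b).

Let X1 := lsubmx X.
Let X2 := rsubmx X.

Definition group_subgrad (b : 'cV[R]_k) : 'cV[R]_k :=
  (n%:R * lam)^-1 *: (X1^T *m (y - X1 *m b - X2 *m gam b)).

Let mixed_pen (z : 'cV[R]_(k + m)) := lam * (vnorm (usubmx z) + l1norm (dsubmx z)).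

Let mixed_pen_convex : convex_fun mixed_pen.
Proof.
apply: convexZ (ltW lam_gt0) _.
exact: convex_col_mx (@convex_vnorm _ _) (@convex_l1norm _ _).
Qed.

Let lasso_pen_convex : convex_fun (fun g : 'cV[R]_m => lam * l1norm g).
Proof. exact: convexZ (ltW lam_gt0) (@convex_l1norm _ _). Qed.

Lemma mixed_obj_col_mx b g :
  mixed_obj X y lam (col_mx b g) = partial_obj X y lam b g + lam * vnorm b.
Proof.
rewrite /mixed_obj /partial_obj col_mxKu col_mxKd mulmx_col_mx opprD addrA.
by rewrite mulrDr addrA addrAC.
Qed.

Lemma partial_objE b g :
  partial_obj X y lam b g = lsq (y - X2 *m g) X1 b + lam * l1norm g.
Proof. by rewrite /partial_obj /lsq addrAC. Qed.

Lemma group_subgrad_le b b' :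
  dot (group_subgrad b) (b' - b) <= vnorm b' - vnorm b <->
  n%:R^-1 * dot (y - X1 *m b - X2 *m gam b) (X1 *m (b' - b))
    <= lam * vnorm b' - lam * vnorm b.
Proof.
rewrite /group_subgrad dotZl dot_trmx -mulrBr -(ler_pM2l lam_gt0) mulrA.
by rewrite invfM mulrCA mulfV ?gt_eqF // mulr1.
Qed.

Lemma usubmx_argminP b :
  usubmx beta = b <-> forall b', dot (group_subgrad b) (b' - b) <= vnorm b' - vnorm b.
Proof.
split=> [<- b' | subgrad].
  set g := dsubmx beta; have beta_eq : beta = col_mx (usubmx beta) g by rewrite vsubmxK.
  have g_min : is_argmin (partial_obj X y lam (usubmx beta)) g.
    move=> g'; have := beta_min (col_mx (usubmx beta) g').
    by rewrite {1}beta_eq !mixed_obj_col_mx lerD2r.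
  have fitE : X2 *m g = X2 *m gam (usubmx beta).
    exact: argmin_lsq_fit_unique n_gt0 lasso_pen_convex g_min (gam_min _).
  have b_min : is_argmin (fun b => lsq (y - X2 *m g) X1 b + lam * vnorm b) (usubmx beta).
    move=> c; have := beta_min (col_mx c g).
    by rewrite {1}beta_eq !mixed_obj_col_mx !partial_objE; lra.
  have := (is_argmin_lsqP _ _ _ (convexZ (ltW lam_gt0) (@convex_vnorm _ _))).1 b_min b'.
  by rewrite group_subgrad_le addrAC fitE.
pose z0 := col_mx b (gam b).
have z0_min : is_argmin (mixed_obj X y lam) z0.
  apply/(is_argmin_lsqP _ _ _ mixed_pen_convex) => z.
  rewrite -[z]vsubmxK /mixed_pen !col_mxKu !col_mxKd /z0.
  rewrite opp_col_mx add_col_mx !mulmx_col_mx -/X1 -/X2 opprD addrA dotDr.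
  have := (is_argmin_lsqP _ _ _ lasso_pen_convex).1 (gam_min b) (dsubmx z).
  move: (subgrad (usubmx z)); rewrite group_subgrad_le; lra.
have fitE := argmin_lsq_fit_unique n_gt0 mixed_pen_convex beta_min z0_min.
by rewrite (full_col_rank_mulmx_inj rankX fitE) col_mxKu.
Qed.

End GroupLassoOptimality.

Unset Implicit Arguments.
Unset Strict Implicit.

Theorem theoremC8 (R : realType) (n k m : nat)
  (X : 'M[R]_(n, k + m)) (y : 'cV[R]_n) (lam : R)
  (V : 'M[R]_(n, k + (n - (k + m))))
  (beta : 'cV[R]_(k + m)) (gam : 'cV[R]_k -> 'cV[R]_m) :
  (k + m <= n)%N ->
  \rank X = (k + m)%N ->
  (0 < k)%N -> (0 < m)%N ->
  0 < lam ->
  let P := Pminus X k in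
  let sigma := vnorm ((1%:M - P) *m y) in
  0 < sigma ->
  (* V : orthonormal columns spanning the orthogonal complement of col(X_{-1:k}) *)
  V^T *m V = 1%:M ->
  (V^T == kermx (rsubmx X))%MS ->
  (* first k columns of V *)
  (forall c : 'I_k,
     col (lshift _ c) V =
       (vnorm ((1%:M - Pminus X c.+1) *m col (lshift m c) X))^-1
         *: ((1%:M - Pminus X c.+1) *m col (lshift m c) X)) ->
  (* beta = hat beta^lambda, gam b = hat beta^lambda_{-1:k}(b) *)
  is_argmin (mixed_obj X y lam) beta ->
  (forall b : 'cV[R]_k, is_argmin (partial_obj X y lam b) (gam b)) ->
  let yhat := P *m y in
  let u1 := sigma^-1 *: usubmx (V^T *m (y - yhat)) in
  let Lam := fun (b eps : 'cV[R]_k) =>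
    sigma^-1 *: (invmx ((lsubmx X)^T *m lsubmx V) *m
      (- ((lsubmx X)^T *m (yhat - lsubmx X *m b - rsubmx X *m gam b))
       + (n%:R * lam) *: eps)) in
  forall b : 'cV[R]_k,
    usubmx beta = b <->
    (if b != 0 then u1 = Lam b ((vnorm b)^-1 *: b)
     else exists2 eps : 'cV[R]_k, vnorm eps <= 1 & u1 = Lam 0 eps).
Proof.
move=> kmn rankX _ m_gt0 lam_gt0 P sigma sigma_gt0 VV VX Vgs beta_min gam_min
  yhat u1 Lam b.
have n_gt0 : (0 < n)%N by apply: leq_trans kmn; rewrite addn_gt0 m_gt0 orbT.
have /andP[/sub_kermxP VX2 kerX2V] := VX.
have Lam_eq b' eps : u1 = Lam b' eps <-> eps = group_subgrad X y lam gam b'.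
  rewrite scale_invmx_eqP ?invr_eq0 ?gt_eqF ?(unitmx_trX1_mulV1 VV VX2 Vgs) //.
  rewrite -(trX1_mul_resid VV VX2 Vgs kerX2V) -mulmxDr addrA subrKA.
  have nlam_neq0 : n%:R * lam != 0 by rewrite mulf_neq0 ?gt_eqF ?ltr0n.
  by rewrite /group_subgrad; split=> ->; rewrite scalerA ?mulVf ?mulfV ?scale1r.
rewrite (usubmx_argminP n_gt0 lam_gt0 rankX beta_min gam_min).
rewrite vnorm_subgradP vnorm_subgrad_cases.
have [->|b_neq0] /= := eqVneq b 0; last by rewrite Lam_eq; split=> ->.
split=> [sub_le1|[eps eps_le1 /Lam_eq <- //]].
by exists (group_subgrad X y lam gam 0); last exact/Lam_eq.
Qed.
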